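(* Every regular Stanley sequence of character $0$ has $S(0)$ as its core, where $S(0)=0,1,3,4,9,10,12,13,27,\ldots$ is the Stanley sequence generated by $\{0\}$.
   Context: A set of non-negative integers is 3-free if no three of its elements form an arithmetic progression. For a finite 3-free set $A=\{a_0<\cdots<a_k\}$ of non-negative integers, the Stanley sequence $S(A)=(a_n)_{n\ge0}$ is the increasing sequence with initial terms $a_0,\ldots,a_k$ in which each subsequent $a_{n+1}$ is the smallest integer greater than $a_n$ such that $\{a_0,\ldots,a_{n+1}\}$ is 3-free. Throughout, Stanley sequences are in root position ($a_0=0$). A Stanley sequence $(a_n)$ is independent with character $\lambda$ if for all sufficiently large $k$: $a_{2^k+i}=a_{2^k}+a_i$ for $0\le i<2^k$, and $a_{2^k}=2a_{2^k-1}-\lambda+1$. A Stanley sequence $(a_n)$ is regular with character $\lambda$ and core $(a'_n)$ if there exist a constant $\sigma$ and an independent Stanley sequence $(a'_n)$ of character $\lambda$ such that for all large $k$ and $0\le i<2^k$: $a_{2^k-\sigma+i}=a_{2^k-\sigma}+a'_i$ and $a_{2^k-\sigma}=2a_{2^k-\sigma-1}-\lambda+1$ (these data are unique). *)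

From mathcomp Require Import all_boot all_order all_algebra.
Set Implicit Arguments. Unset Strict Implicit. Unset Printing Implicit Defensive.
Import Order.TTheory GRing.Theory Num.Theory.

Definition three_free (P : nat -> Prop) : Prop :=
  forall x y z, P x -> P y -> P z -> x < y -> y < z -> x + z <> 2 * y.

Definition init_set (a : nat -> nat) (n : nat) : nat -> Prop :=
  fun x => exists2 i, i <= n & a i = x.

Definition stanley_of (A : seq nat) (a : nat -> nat) : Prop :=
  [/\ A != [::], sorted ltn A, three_free (fun x => x \in A),
      (forall i, i < size A -> a i = nth 0 A i) &
      (forall n, (size A).-1 <= n ->
         [/\ a n < a n.+1,
             three_free (init_set a n.+1) &
             forall m, a n < m -> m < a n.+1 ->
               ~ three_free (fun x => init_set a n x \/ x = m)])].

(* A Stanley sequence in root position: S(A) for some finite 3-free A with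
   a_0 = 0. *)
Definition stanley (a : nat -> nat) : Prop :=
  exists A, stanley_of A a /\ a 0 = 0.

Definition independent (a : nat -> nat) (lam : int) : Prop :=
  exists K, forall k, K <= k ->
    (forall i, i < 2 ^ k -> a (2 ^ k + i) = a (2 ^ k) + a i) /\
    Posz (a (2 ^ k)%N) = (2 * Posz (a (2 ^ k - 1)%N) - lam + 1)%R.

(* a is regular with character lam and core a'. Indices 2^k - sigma are
   taken in int (sigma is an integer constant); for large k they are
   positive, which we record explicitly. *)
Definition regular_core (a : nat -> nat) (lam : int) (a' : nat -> nat) : Prop :=
  stanley a' /\ independent a' lam /\
  exists sigma : int, exists K, forall k, K <= k ->
    let n := `|Posz (2 ^ k)%N - sigma|%N in
    (0 < Posz (2 ^ k)%N - sigma)%R /\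
    (forall i, i < 2 ^ k -> a (n + i) = a n + a' i) /\
    Posz (a n) = (2 * Posz (a n.-1%N) - lam + 1)%R.

From mathcomp Require Import all_boot all_order all_algebra.
From mathcomp Require Import zify.

(* An independent Stanley sequence of character 0 is self-similar at every
   large N = 2^k: the block a_N, ..., a_{2N-1} is the block a_0, ..., a_{N-1}
   translated by a_N = 2 a_{N-1} + 1, i.e. by more than twice its diameter.
   Such a translate cannot take part in a 3-term progression together with the
   lower block, so the greedy choice of a_{N+n+1} is the translate of the
   greedy choice of a_{n+1}.  Hence the core is the greedy extension of {0},
   which is S(0); nothing about the regular sequence a itself is needed. *)

Definition greedy_step (a : nat -> nat) (n : nat) : Prop :=
  [/\ a n < a n.+1, three_free (init_set a n.+1) &
      forall m, a n < m -> m < a n.+1 ->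
        ~ three_free (fun x => init_set a n x \/ x = m)].

Definition self_similar_at (a : nat -> nat) (N : nat) : Prop :=
  (forall i, i < N -> a (N + i) = a N + a i) /\ a N = 2 * a N.-1 + 1.

Lemma three_free_sub (P Q : nat -> Prop) :
  (forall x, P x -> Q x) -> three_free Q -> three_free P.
Proof. by move=> PQ tfQ x y z Px Py Pz; apply: tfQ; apply: PQ. Qed.

Lemma init_set_mono (a : nat -> nat) m n x :
  m <= n -> init_set a m x -> init_set a n x.
Proof. by move=> le_mn [i le_im <-]; exists i => //; apply: leq_trans le_mn. Qed.

Lemma three_free_union_translate (B C : nat -> Prop) (M c : nat) :
  (forall x, B x -> x <= M) -> (forall x, C x -> x <= M) -> 2 * M < c ->
  three_free B -> three_free C ->
  three_free (fun x => B x \/ exists2 y, C y & x = c + y).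
Proof.
move=> leB leC ltMc tfB tfC x y z Px Py Pz.
case: Pz => [Bz | [z' Cz' ->]].
  have le_zM := leB z Bz.
  case: Px => [Bx | [x' _ ->]]; last lia.
  case: Py => [By | [y' _ ->]]; last lia.
  exact: tfB.
have le_z'M := leC z' Cz'.
case: Py => [By | [y' Cy' ->]].
  by have := leB y By; lia.
case: Px => [Bx | [x' Cx' ->]].
  by have := leB x Bx; lia.
move=> lt_xy lt_yz E; apply: (tfC x' y' z') => //; lia.
Qed.

Lemma greedy_step_translate (a : nat -> nat) (N n : nat) :
  {homo a : i j / i < j} -> self_similar_at a N -> n.+1 < N ->
  greedy_step a (N + n) -> greedy_step a n.
Proof.
move=> incr [shift aN] lt_nN [_ tf_big greedy_big].
have le_top i : i < N -> a i <= a N.-1.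
  by move=> lt_iN; apply: ltnW_homo incr _ _ _; lia.
split; first exact: incr.
  by apply: three_free_sub tf_big => x; apply: init_set_mono; lia.
move=> m lo hi tf_m; apply: (greedy_big (a N + m)).
- by rewrite shift; lia.
- by rewrite -[(N + n).+1]addnS shift //; lia.
have tf_low : three_free (init_set a N.-1).
  by apply: three_free_sub tf_big => x; apply: init_set_mono; lia.
have le_m : m <= a N.-1 by have := le_top n.+1 lt_nN; lia.
apply: three_free_sub
  (@three_free_union_translate _ _ (a N.-1) (a N) _ _ _ tf_low tf_m).
- move=> x [[i le_i <-] | ->]; last by right; exists m => //; right.
  case: (ltnP i N) => [lt_iN | le_Ni]; first by left; exists i => //; lia.
  right; exists (a (i - N)); first by left; exists (i - N) => //; lia.
  by rewrite -shift ?subnKC //; lia.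
- by move=> x [i lt_iN <-]; apply: le_top; lia.
- by move=> x [[i le_in <-] | ->] //; apply: le_top; lia.
- lia.
Qed.

Lemma independent0_self_similar (a : nat -> nat) :
  independent a 0 -> exists K, forall k, K <= k -> self_similar_at a (2 ^ k).
Proof.
move=> [K indK]; exists K => k le_Kk; have [shift aN] := indK k le_Kk.
by split=> //; rewrite -subn1; lia.
Qed.

Theorem mainTheorem13 (a a' : nat -> nat) :
  stanley a -> regular_core a 0%R a' -> stanley_of [:: 0] a'.
Proof.
move=> _ [[A [[_ _ _ _ greedyA] a'0]] [/independent0_self_similar[K ssK] _]].
have blocks n : exists N, [/\ n.+1 < N, self_similar_at a' N & greedy_step a' (N + n)].
  have big := ltn_expl (K + size A + n.+2) (isT : 1 < 2).
  exists (2 ^ (K + size A + n.+2)); split; first lia.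
    by apply: ssK; lia.
  by apply: greedyA; lia.
have incr : {homo a' : i j / i < j}.
  apply: homo_ltn => [y x z|n]; first exact: ltn_trans.
  have [N [lt_nN [shift _] [+ _ _]]] := blocks n.
  by rewrite -[(N + n).+1]addnS !shift //; lia.
split=> //; first by move=> x y z; rewrite !inE => /eqP-> /eqP->.
  by case.
move=> n _; have [N [lt_nN ssN greedyN]] := blocks n.
exact: greedy_step_translate greedyN.
Qed.
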